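(* Let $q\equiv1\pmod4$ be a prime power, let $i_2$ be an even integer with $0<i_2<(q+1)/2$, and let $r$ be a positive integer with $\gcd(r,q-1)=\gcd(r-i_2,(q+1)/2)=\gcd(r-2i_2,(q+1)/2)=1$. Let $b\in\mathbb F_{q^2}^*$ satisfy $(2/b)^{(q+1)/2}=1$. Then $$X^r\bigl(1-X^{(q^2-1)/2}+bX^{i_2(q-1)}\bigr)$$ is a permutation polynomial of $\mathbb F_{q^2}$. *)

From mathcomp Require Import all_boot all_order all_algebra all_field.
Set Implicit Arguments. Unset Strict Implicit. Unset Printing Implicit Defensive.
Import GRing.Theory.
Local Open Scope ring_scope.

Definition is_perm_poly (F : finFieldType) (f : {poly F}) : Prop :=
  bijective (fun x : F => f.[x]).

Definition prime_power (q : nat) : Prop :=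
  exists p k : nat, prime p /\ (0 < k)%N /\ q = (p ^ k)%N.

From mathcomp Require Import all_boot all_order all_algebra all_field.
From mathcomp Require Import zify.

Set Implicit Arguments.
Unset Strict Implicit.
Unset Printing Implicit Defensive.

Import GRing.Theory.
Local Open Scope ring_scope.

(* Write f = X^r h(X^(q-1)) with h = 1 - X^s + b X^i2 and s = (q+1)/2.  Since
   x^(q-1) is a (q+1)-th root of unity for x != 0, f permutes F as soon as
   gcd(r, q-1) = 1, h has no root u with u^(q+1) = 1, and g(u) = u^r h(u)^(q-1)
   is injective on these roots.  For such u we have u^s = 1 or u^s = -1; using
   the Frobenius x |-> x^q and b^(q+1) = 4 (which is what (2/b)^s = 1 gives),
   - if u^s = 1 then h(u) = b u^i2 and g(u) b^2 u^(2 i2) = 4 u^r,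
   - if u^s = -1 then h(u) = 2 + b u^i2 and g(u) b u^i2 = 2 u^r.
   Raising to the power s shows g(u)^s = u^s, so g(u) = g(v) puts u and v in
   the same case, and then (u/v)^(r-k) = 1 = (u/v)^s with k = 2 i2 or k = i2;
   the coprimality hypotheses force u = v. *)

Section CoprimeExponents.
Variable F : fieldType.

Lemma expr_eq1_coprime (w : F) (s r k : nat) :
  w != 0 -> w ^+ s = 1 -> w ^+ r = w ^+ k ->
  gcdz (r%:Z - k%:Z) s%:Z = 1%N -> w = 1.
Proof.
move=> w0 ws wrk g1.
have [a [c Bezout]] := Bezoutz (r%:Z - k%:Z) s%:Z; rewrite g1 in Bezout.
have wrk1 : w ^ (r%:Z - k%:Z) = 1.
  by rewrite expfzDr // -invr_expz -!exprnP wrk divff ?expf_neq0.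
have -> : w = w ^ (a * (r%:Z - k%:Z) + c * s%:Z) by rewrite Bezout expr1z.
rewrite expfzDr // [a * _]mulrC [c * _]mulrC -!exprz_exp.
by rewrite wrk1 -exprnP ws !exp1rz mulr1.
Qed.

Lemma eq_expr_coprime (u v : F) (s r k : nat) :
  u != 0 -> v != 0 -> u ^+ s = v ^+ s -> u ^+ r * v ^+ k = v ^+ r * u ^+ k ->
  gcdz (r%:Z - k%:Z) s%:Z = 1%N -> u = v.
Proof.
move=> u0 v0 uvs uvrk g1.
have uv0 : u / v != 0 by rewrite mulf_neq0 ?invr_eq0.
suff uv1 : u / v = 1 by rewrite -(divfK v0 u) uv1 mul1r.
apply: (expr_eq1_coprime uv0 _ _ g1); first by rewrite expr_div_n uvs divff ?expf_neq0.
rewrite !expr_div_n; apply/eqP; rewrite eqr_div ?expf_neq0 //.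
by rewrite uvrk mulrC.
Qed.

Lemma eq_expr_coprime_twisted (u v a c : F) (s r k : nat) :
  c != 0 -> u != 0 -> v != 0 -> u ^+ s = v ^+ s ->
  a * u ^+ k = c * u ^+ r -> a * v ^+ k = c * v ^+ r ->
  gcdz (r%:Z - k%:Z) s%:Z = 1%N -> u = v.
Proof.
move=> c0 u0 v0 uvs def_u def_v; apply: eq_expr_coprime => //.
by apply: (mulfI c0); rewrite !mulrA -def_u -def_v mulrAC.
Qed.

End CoprimeExponents.

Lemma injective_expr_comp (F : finFieldType) (d m r : nat) (h : F -> F) :
  #|F| = (d * m).+1 -> (0 < r)%N -> gcdn r d = 1%N ->
  (forall u, u ^+ m = 1 -> h u != 0) ->
  {in [pred u | u ^+ m == 1] &, injective (fun u => u ^+ r * h u ^+ d)} ->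
  injective (fun x => x ^+ r * h (x ^+ d)).
Proof.
move=> cardF r_gt0 rd1 h_neq0 g_inj.
have unity_d (x : F) : x != 0 -> (x ^+ d) ^+ m = 1.
  by move=> x0; rewrite -exprM; apply: (mulIf x0); rewrite mul1r -exprSr -cardF expf_card.
have f_neq0 (x : F) : x != 0 -> x ^+ r * h (x ^+ d) != 0.
  by move=> x0; rewrite mulf_neq0 ?expf_neq0 ?h_neq0 ?unity_d.
have f0 : 0 ^+ r * h (0 ^+ d) = 0 :> F by rewrite expr0n gtn_eqF ?mul0r.
move=> x y /=.
have [-> | x0] := eqVneq x 0; have [-> | y0] := eqVneq y 0 => //.
- by rewrite f0 => /esym/eqP; rewrite (negbTE (f_neq0 y y0)).
- by rewrite f0 => /eqP; rewrite (negbTE (f_neq0 x x0)).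
move=> fxy.
have xy_d : x ^+ d = y ^+ d.
  apply: g_inj; rewrite /= ?inE ?unity_d //.
  by rewrite -!exprM !(mulnC d) !exprM -!exprMn fxy.
move: fxy; rewrite xy_d => /(mulIf (h_neq0 _ (unity_d y y0))) xy_r.
apply: (eq_expr_coprime (r := r) (k := 0) x0 y0 xy_d); first by rewrite !expr0 xy_r.
by rewrite subr0 /gcdz /= rd1.
Qed.

Lemma natr2_neq0_pchar_odd (R : nzSemiRingType) (p n : nat) :
  p \in [pchar R] -> (p %| n)%N -> odd n -> (2 : R) != 0.
Proof.
move=> pchar_p p_n; rewrite -coprime2n => /eqP coprime_2n.
apply: contraTneq (pcharf_prime pchar_p) => two0.
have : (p %| gcdn 2 n)%N by rewrite dvdn_gcd p_n (dvdn_pcharf pchar_p) two0 eqxx.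
by rewrite coprime_2n dvdn1 => /eqP ->.
Qed.

Lemma odd_coprime_even (m n : nat) : coprime m n -> ~~ odd n -> odd m.
Proof.
move=> /eqP mn1 n_even; apply: contraT => m_even.
have : (2 %| gcdn m n)%N by rewrite dvdn_gcd !dvdn2 m_even.
by rewrite mn1.
Qed.

Lemma half_succ_mod4 (q : nat) :
  (q %% 4 = 1)%N -> (q + 1 = 2 * ((q + 1) %/ 2))%N /\ odd ((q + 1) %/ 2).
Proof.
move=> q4; have def_q : q = (q %/ 4 * 4 + 1)%N by rewrite {1}(divn_eq q 4) q4.
have -> : ((q + 1) %/ 2 = q %/ 4 * 2 + 1)%N by rewrite {1}def_q; lia.
by rewrite oddD oddM andbF; split => //; lia.
Qed.

Section Trinomial.
Variables (F : fieldType) (q s i2 r : nat) (b : F).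
Hypotheses (q_pchar : [pchar F].-nat q) (two_neq0 : (2 : F) != 0).
Hypotheses (def_q : (q + 1 = 2 * s)%N) (s_odd : odd s).
Hypotheses (i2_even : ~~ odd i2) (r_odd : odd r) (b_s : b ^+ s = 2 ^+ s).

Definition trinomial (u : F) := 1 - u ^+ s + b * u ^+ i2.
Definition twist (u : F) := u ^+ r * trinomial u ^+ (q - 1).

Let unity_neq0 (u : F) : u ^+ (q + 1) = 1 -> u != 0.
Proof. by apply: contra_eq_neq => ->; rewrite expr0n addn1 eq_sym oner_neq0. Qed.

Let q_gt0 : (0 < q)%N.
Proof. by move: def_q; lia. Qed.

Lemma expr_s_unity (u : F) : u ^+ (q + 1) = 1 -> u ^+ s = 1 \/ u ^+ s = -1.
Proof.
move=> u1; have /eqP : (u ^+ s) ^+ 2 = 1 by rewrite -exprM mulnC -def_q.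
by rewrite sqrf_eq1 => /orP[] /eqP; [left | right].
Qed.

Lemma expr_q_nat2 : (2 : F) ^+ q = 2.
Proof. by rewrite -[2]/(1 + 1 : F) exprDn_pchar // expr1n. Qed.

Lemma expr_qS_b : b ^+ (q + 1) = 4.
Proof.
rewrite def_q mulnC exprM b_s -exprM mulnC -def_q exprD expr_q_nat2.
by rewrite -natrM.
Qed.

Lemma twist_pos (u : F) : u ^+ (q + 1) = 1 -> u ^+ s = 1 ->
  twist u * b ^+ 2 * u ^+ (2 * i2) = 4 * u ^+ r.
Proof.
move=> u1 us1.
have b_u2 : (b * u ^+ i2) ^+ (q - 1) * (b ^+ 2 * u ^+ (2 * i2)) = 4.
  rewrite mulnC exprM -exprMn -exprD (_ : q - 1 + 2 = q + 1)%N; last by lia.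
  by rewrite exprMn expr_qS_b exprAC u1 expr1n mulr1.
by rewrite /twist /trinomial us1 subrr add0r -mulrA -mulrA b_u2 mulrC.
Qed.

Lemma trinomial_neg (u : F) : u ^+ s = -1 -> trinomial u = 2 + b * u ^+ i2.
Proof. by move=> us; rewrite /trinomial us opprK. Qed.

Lemma trinomial_neg_neq0 (u : F) : u ^+ s = -1 -> trinomial u != 0.
Proof.
move=> us; rewrite trinomial_neg //; apply/negP => /eqP sum0.
have bu : b * u ^+ i2 = - 2 by apply/eqP; rewrite -addr_eq0 addrC sum0.
move: (congr1 (fun z => z ^+ s) bu); rewrite /= exprMn exprAC us b_s.
rewrite -signr_odd (negbTE i2_even) mulr1 exprNn -signr_odd s_odd mulN1r.
move=> /eqP; rewrite -subr_eq0 opprK -mulr2n -(mulr_natl (2 ^+ s : F) 2).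
by rewrite mulf_eq0 expf_eq0 (negbTE two_neq0) andbF.
Qed.

Lemma twist_neg (u : F) : u ^+ (q + 1) = 1 -> u ^+ s = -1 ->
  twist u * b * u ^+ i2 = 2 * u ^+ r.
Proof.
move=> u1 us.
have w_q : (b * u ^+ i2) ^+ q * (b * u ^+ i2) = 4.
  by rewrite -exprSr -addn1 exprMn expr_qS_b exprAC u1 expr1n mulr1.
have key : trinomial u ^+ (q - 1) * (b * u ^+ i2) = 2.
  apply: (mulIf (trinomial_neg_neq0 us)); rewrite mulrAC -exprSr subn1 prednK //.
  rewrite trinomial_neg // exprDn_pchar // expr_q_nat2 mulrDl w_q mulrDr.
  by rewrite addrC -natrM.
by rewrite /twist -mulrA -mulrA key mulrC.
Qed.

Lemma trinomial_neq0 (u : F) : u ^+ (q + 1) = 1 -> trinomial u != 0.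
Proof.
move=> u1; have [us | us] := expr_s_unity u1; last exact: trinomial_neg_neq0.
have b0 : b != 0.
  apply: contraNneq (expf_neq0 s two_neq0) => b0.
  by rewrite -b_s b0 expr0n eqn0Ngt odd_gt0.
by rewrite /trinomial us subrr add0r mulf_neq0 // expf_neq0 // unity_neq0.
Qed.

Lemma twist_expr_s (u : F) : u ^+ (q + 1) = 1 -> twist u ^+ s = u ^+ s.
Proof.
have four_s : (4 : F) ^+ s = 2 ^+ s * 2 ^+ s by rewrite -exprMn -natrM.
have four_s_neq0 : (4 : F) ^+ s != 0 by rewrite four_s mulf_neq0 ?expf_neq0.
move=> u1; have [us | us] := expr_s_unity u1; rewrite us.
- have := twist_pos u1 us; move: (twist u) => t /(congr1 (fun z => z ^+ s)) /=.
  rewrite !exprMn b_s -four_s (exprAC u (2 * i2)) (exprAC u r) us.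
  rewrite !expr1n !mulr1 -[RHS]mul1r.
  exact: (mulIf four_s_neq0).
- have := twist_neg u1 us; move: (twist u) => t /(congr1 (fun z => z ^+ s)) /=.
  rewrite !exprMn b_s (exprAC u i2) (exprAC u r) us.
  rewrite -(signr_odd _ i2) -(signr_odd _ r) (negbTE i2_even) r_odd mulr1.
  rewrite expr1 mulrN1 -[RHS]mulN1r.
  exact: (mulIf (expf_neq0 s two_neq0)).
Qed.

Lemma twist_inj :
  gcdz (r%:Z - i2%:Z) s%:Z = 1%N -> gcdz (r%:Z - (2 * i2)%N%:Z) s%:Z = 1%N ->
  {in [pred u | u ^+ (q + 1) == 1] &, injective twist}.
Proof.
move=> coprime_i2 coprime_2i2 u v; rewrite !inE => /eqP u1 /eqP v1 tw_uv.
have uv_s : u ^+ s = v ^+ s by rewrite -twist_expr_s // tw_uv twist_expr_s.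
have u0 := unity_neq0 u1; have v0 := unity_neq0 v1.
have [us | us] := expr_s_unity u1; move: (us); rewrite uv_s => vs.
- have four_neq0 : (4 : F) != 0 by rewrite (natrM F 2 2) mulf_neq0.
  apply: (eq_expr_coprime_twisted four_neq0 u0 v0 uv_s _ _ coprime_2i2).
    exact: twist_pos.
  by rewrite tw_uv; exact: twist_pos.
- apply: (eq_expr_coprime_twisted two_neq0 u0 v0 uv_s _ _ coprime_i2).
    exact: twist_neg.
  by rewrite tw_uv; exact: twist_neg.
Qed.

End Trinomial.

Theorem mainTheorem18 (F : finFieldType) (q i2 r : nat) (b : F)
  (hq : prime_power q) (hq4 : (q %% 4 = 1)%N)
  (hF : #|F| = (q ^ 2)%N)
  (hi2even : ~~ odd i2) (hi2pos : (0 < i2)%N) (hi2lt : (i2 < (q + 1) %/ 2)%N)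
  (hr : (0 < r)%N)
  (hg1 : gcdn r (q - 1) = 1%N)
  (hg2 : gcdz (r%:Z - i2%:Z) ((q + 1) %/ 2)%N%:Z = 1%N)
  (hg3 : gcdz (r%:Z - (2 * i2)%N%:Z) ((q + 1) %/ 2)%N%:Z = 1%N)
  (hb0 : b != 0)
  (hb : (2%:R / b) ^+ ((q + 1) %/ 2) = 1) :
  is_perm_poly ('X^r * (1 - 'X^((q ^ 2 - 1) %/ 2) + b *: 'X^(i2 * (q - 1)))).
Proof.
have [p [k [p_prime [k_gt0 def_q]]]] := hq.
set s := ((q + 1) %/ 2)%N in hi2lt hg2 hg3 hb *.
have [def_s s_odd] := half_succ_mod4 hq4.
have q_odd : odd q by rewrite (divn_eq q 4) hq4 oddD oddM andbF.
have cardF : #|F| = ((q - 1) * (q + 1)).+1 by rewrite hF; nia.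
have pchar_p : p \in [pchar F].
  by apply: (card_finPcharP (n := (k * 2)%N)); rewrite // hF def_q expnM.
have q_pchar : [pchar F].-nat q by rewrite def_q pnatX (pnatE _ p_prime) pchar_p.
have two_neq0 : (2 : F) != 0.
  by apply: (natr2_neq0_pchar_odd pchar_p _ q_odd); rewrite def_q dvdn_exp.
have b_s : b ^+ s = 2 ^+ s.
  by rewrite -[RHS](divfK (expf_neq0 s hb0)) -expr_div_n hb mul1r.
have r_odd : odd r.
  by apply: (odd_coprime_even (n := q - 1)); [apply/eqP | rewrite oddB ?odd_gt0 ?q_odd].
have eval_f (x : F) :
    ('X^r * (1 - 'X^((q ^ 2 - 1) %/ 2) + b *: 'X^(i2 * (q - 1)))).[x]
    = x ^+ r * trinomial s i2 b (x ^+ (q - 1)).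
  rewrite !hornerE (_ : q ^ 2 - 1 = (q - 1) * (2 * s))%N; last by rewrite -def_s -subn_sqr.
  by rewrite mulnCA mulKn // /trinomial -!exprM [(i2 * _)%N]mulnC.
apply: (eq_bij _ (fun x => esym (eval_f x))).
apply/injF_bij/(injective_expr_comp cardF hr hg1).
  exact: trinomial_neq0 two_neq0 def_s s_odd hi2even b_s.
exact: twist_inj q_pchar two_neq0 def_s s_odd hi2even r_odd b_s hg2 hg3.
Qed.
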